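(* Let $\frac{p}{q}\in\mathbb{Q}\cap[0,1)$. Then there exists an integer $k\ge 0$ such that $R^k\!\left(\frac{p}{q}\right)\in\{0,\tfrac12\}$.
   Context: The map $R:[0,1)\to[0,1)$ is defined by $R(s)=\frac{s}{1-2s}-\left\lfloor\frac{s}{1-2s}\right\rfloor$ for $s\in[0,\tfrac12)$ and $R(s)=1-s$ for $s\in[\tfrac12,1)$; $R^k$ denotes the $k$-fold iterate, $R^0$ the identity. *)

From Stdlib Require Import Reals ZArith.
Open Scope R_scope.

(* floor x = Int_part x (Int_part x = up x - 1 is the floor of x). *)
Definition floorR (x : R) : R := IZR (Int_part x).

Definition Rmap (s : R) : R :=
  if Rlt_dec s (1/2) then s / (1 - 2*s) - floorR (s / (1 - 2*s))
  else 1 - s.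

Definition Rmap_iter (k : nat) (s : R) : R := Nat.iter k Rmap s.

(* Strong induction on the denominator.  Below 1/2 the map sends p/q to
   (p mod d)/d with d = q - 2p < q, a fraction with a smaller denominator;
   above 1/2 it sends p/q to (q - p)/q, which lies below 1/2. *)

From Stdlib Require Import Reals ZArith Lra Lia.
Open Scope R_scope.

Lemma Rmap_iter_S (k : nat) (s : R) : Rmap_iter (S k) s = Rmap_iter k (Rmap s).
Proof. unfold Rmap_iter. apply Nat.iter_succ_r. Qed.

Lemma IZR_div_bounds (p q : Z) :
  (0 < q)%Z -> 0 <= IZR p / IZR q < 1 -> (0 <= p < q)%Z.
Proof.
  intros Hq [H0 H1].
  assert (Hqr : 0 < IZR q) by (apply IZR_lt; exact Hq).
  assert (Ep : IZR p = IZR p / IZR q * IZR q) by (field; lra).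
  split; [apply le_IZR | apply lt_IZR]; rewrite Ep; nra.
Qed.

Lemma frac_IZR_div (a d : Z) :
  (0 < d)%Z -> IZR a / IZR d - floorR (IZR a / IZR d) = IZR (a mod d) / IZR d.
Proof.
  intros Hd.
  assert (Hdr : 0 < IZR d) by (apply IZR_lt; exact Hd).
  pose proof (Z.mod_pos_bound a d Hd) as [Hm0 Hm1].
  apply IZR_le in Hm0. apply IZR_lt in Hm1.
  assert (Ediv : IZR a / IZR d = IZR (a / d) + IZR (a mod d) / IZR d).
  { rewrite (Z.div_mod a d) at 1 by lia.
    rewrite plus_IZR, mult_IZR. field. lra. }
  assert (Hfrac : 0 <= IZR (a mod d) / IZR d < 1).
  { split.
    - apply Rmult_le_pos; [lra | left; apply Rinv_0_lt_compat; lra].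
    - apply (Rmult_lt_reg_r (IZR d)); [lra |].
      unfold Rdiv. rewrite Rmult_assoc, Rinv_l; lra. }
  destruct (Int_part_frac_part_spec _ _ _ Hfrac Ediv) as [Hint _].
  unfold floorR. rewrite <- Hint, Ediv. ring.
Qed.

Lemma Rmap_below_half (p q : Z) :
  (0 <= p)%Z -> (2 * p < q)%Z ->
  Rmap (IZR p / IZR q) = IZR (p mod (q - 2 * p)) / IZR (q - 2 * p).
Proof.
  intros Hp Hpq.
  assert (Hd : (0 < q - 2 * p)%Z) by lia.
  assert (Hdr : 0 < IZR q - 2 * IZR p).
  { rewrite <- mult_IZR, <- minus_IZR. apply IZR_lt. exact Hd. }
  assert (Hqr : 0 < IZR q) by (apply IZR_lt; lia).
  assert (Hpr : 0 <= IZR p) by (apply IZR_le; exact Hp).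
  assert (Eratio : IZR p / IZR q / (1 - 2 * (IZR p / IZR q)) = IZR p / IZR (q - 2 * p)).
  { rewrite minus_IZR, mult_IZR. field. lra. }
  unfold Rmap. destruct (Rlt_dec _ _) as [_ | Hge].
  - rewrite Eratio. apply frac_IZR_div. exact Hd.
  - exfalso. apply Hge.
    apply (Rmult_lt_reg_r (2 * IZR q)); [lra |].
    replace (IZR p / IZR q * (2 * IZR q)) with (2 * IZR p) by (field; lra). lra.
Qed.

Lemma Rmap_above_half (p q : Z) :
  (0 < q < 2 * p)%Z -> Rmap (IZR p / IZR q) = IZR (q - p) / IZR q.
Proof.
  intros Hpq.
  assert (Hqr : 0 < IZR q) by (apply IZR_lt; lia).
  assert (Hlt : IZR q < 2 * IZR p) by (rewrite <- mult_IZR; apply IZR_lt; lia).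
  unfold Rmap. destruct (Rlt_dec _ _) as [Hs | _].
  - exfalso. apply (Rmult_lt_compat_r (2 * IZR q)) in Hs; [| lra].
    replace (IZR p / IZR q * (2 * IZR q)) with (2 * IZR p) in Hs by (field; lra). lra.
  - rewrite minus_IZR. field. lra.
Qed.

Definition reaches_zero_or_half (s : R) : Prop :=
  exists k : nat, Rmap_iter k s = 0 \/ Rmap_iter k s = 1/2.

Lemma reaches_zero_or_half_Rmap (s : R) :
  reaches_zero_or_half (Rmap s) -> reaches_zero_or_half s.
Proof. intros [k Hk]. exists (S k). rewrite Rmap_iter_S. exact Hk. Qed.

Lemma reaches_zero_or_half_below_half (q : Z) :
  (forall d, (0 < d < q)%Z -> forall a, (0 <= a < d)%Z ->
     reaches_zero_or_half (IZR a / IZR d)) ->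
  forall p, (0 <= p)%Z -> (2 * p < q)%Z -> reaches_zero_or_half (IZR p / IZR q).
Proof.
  intros IH p Hp Hpq.
  destruct (Z.eq_dec p 0) as [-> | Hp0].
  - exists O. left. simpl. unfold Rdiv. ring.
  - apply reaches_zero_or_half_Rmap. rewrite Rmap_below_half by assumption.
    apply IH; [lia |]. apply Z.mod_pos_bound. lia.
Qed.

Lemma reaches_zero_or_half_rational (q : Z) :
  (0 <= q)%Z -> forall p, (0 <= p < q)%Z -> reaches_zero_or_half (IZR p / IZR q).
Proof.
  revert q. apply (Z_lt_induction (fun q => forall p, (0 <= p < q)%Z -> _)).
  intros q IH p Hp.
  assert (IH' : forall d, (0 < d < q)%Z -> forall a, (0 <= a < d)%Z ->
                  reaches_zero_or_half (IZR a / IZR d))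
    by (intros d Hd; apply IH; lia).
  destruct (Z.lt_trichotomy (2 * p) q) as [Hlt | [Heq | Hgt]].
  - apply reaches_zero_or_half_below_half; [exact IH' | lia | exact Hlt].
  - exists O. right. simpl. rewrite <- Heq, mult_IZR. field.
    apply not_0_IZR. lia.
  - apply reaches_zero_or_half_Rmap. rewrite Rmap_above_half by lia.
    apply reaches_zero_or_half_below_half; [exact IH' | lia | lia].
Qed.

Theorem lemma3p1 (p q : Z) :
  (0 < q)%Z -> 0 <= IZR p / IZR q < 1 ->
  exists k : nat, Rmap_iter k (IZR p / IZR q) = 0 \/ Rmap_iter k (IZR p / IZR q) = 1/2.
Proof.
  intros Hq Hs.
  apply (reaches_zero_or_half_rational q); [lia |].
  apply IZR_div_bounds; assumption.
Qed.
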